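(* For each $n\ge 0$ there is an isomorphism of $A_n$-bimodules $$D_{n+1}\otimes_{A_{n+1}}X_n\cong A_n\oplus\big(X_{n-1}\otimes_{A_{n-1}}D_n\big),$$ where $A_n$ carries its standard bimodule structure, and for $n=0$ the second summand is interpreted as $0$.
   Context: $A_n$ is the nilCoxeter algebra: the unital $\mathbb{Q}$-algebra generated by $Y_1,\dots,Y_{n-1}$ with relations $Y_i^2=0$, $Y_iY_j=Y_jY_i$ for $|i-j|>1$, $Y_iY_{i+1}Y_i=Y_{i+1}Y_iY_{i+1}$ ($A_0=A_1=\mathbb{Q}$). Let $\chi_n:A_n\to A_{n+1}$, $\chi_n(Y_i)=Y_i$. $X_n$ is $A_{n+1}$ as an $(A_{n+1},A_n)$-bimodule (right action via $\chi_n$) and $D_{n+1}$ is $A_{n+1}$ as an $(A_n,A_{n+1})$-bimodule (left action via $\chi_n$). *)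

From HB Require Import structures.
From mathcomp Require Import all_boot all_order all_fingroup all_algebra.
Set Implicit Arguments. Unset Strict Implicit. Unset Printing Implicit Defensive.
Import GRing.Theory.
Local Open Scope ring_scope.

(** * The nilCoxeter algebra A_n over Q, realized on its standard basis
    {Y_w : w in S_n}, with Y_u Y_v = Y_{uv} if l(uv) = l(u) + l(v) and 0
    otherwise (l = Coxeter length = number of inversions). *)

Definition inv_count n (w : 'S_n) : nat :=
  #|[set p : 'I_n * 'I_n | (p.1 < p.2)%N && (w p.2 < w p.1)%N]|.

Notation NC n := {ffun 'S_n -> rat^o}.

Definition Yb n (w : 'S_n) : NC n := [ffun v => ((v == w) : nat)%:R].

Definition Ygen n (i : 'I_n) (h : (i.+1 < n)%N) : NC n :=
  Yb (tperm i (Ordinal h)).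

Definition ncmul n (a b : NC n) : NC n :=
  \sum_(u : 'S_n) \sum_(v : 'S_n)
     (a u * b v * ((inv_count (u * v)%g == inv_count u + inv_count v)%N : nat)%:R)
       *: Yb (u * v)%g.

Definition ncone n : NC n := Yb 1%g.

(** chi_n : A_n -> A_{n+1}, induced by S_n -> S_{n+1} (fixing the last point);
    it sends Y_i to Y_i. *)
Definition ncchi n (a : NC n) : NC n.+1 :=
  \sum_(w : 'S_n) a w *: Yb (lift_perm ord_max ord_max w).

Definition is_bimod (p q : nat) (M : lmodType rat)
    (l : NC p -> M -> M) (r : M -> NC q -> M) : Prop :=
  (forall (c : rat) a b m, l (c *: a + b) m = c *: l a m + l b m) /\
  (forall (c : rat) a m m', l a (c *: m + m') = c *: l a m + l a m') /\
  (forall (c : rat) m m' b, r (c *: m + m') b = c *: r m b + r m' b) /\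
  (forall (c : rat) m a b, r m (c *: a + b) = c *: r m a + r m b) /\
  (forall a b m, l (ncmul a b) m = l a (l b m)) /\
  (forall m a b, r m (ncmul a b) = r (r m a) b) /\
  (forall m, l (ncone p) m = m) /\
  (forall m, r m (ncone q) = m) /\
  (forall a m b, r (l a m) b = l a (r m b)).

Definition is_bimod_hom (p q : nat) (M N : lmodType rat)
    (lM : NC p -> M -> M) (rM : M -> NC q -> M)
    (lN : NC p -> N -> N) (rN : N -> NC q -> N) (f : M -> N) : Prop :=
  (forall (c : rat) x y, f (c *: x + y) = c *: f x + f y) /\
  (forall a x, f (lM a x) = lN a (f x)) /\
  (forall x b, f (rM x b) = rN (f x) b).

Definition bimod_iso (p q : nat) (M N : lmodType rat)
    (lM : NC p -> M -> M) (rM : M -> NC q -> M)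
    (lN : NC p -> N -> N) (rN : N -> NC q -> N) : Prop :=
  exists f : M -> N, is_bimod_hom lM rM lN rN f /\ bijective f.

Definition is_balanced (p s q : nat) (M N T : lmodType rat)
    (lM : NC p -> M -> M) (rM : M -> NC s -> M)
    (lN : NC s -> N -> N) (rN : N -> NC q -> N)
    (lT : NC p -> T -> T) (rT : T -> NC q -> T) (t : M -> N -> T) : Prop :=
  (forall (c : rat) m m' n, t (c *: m + m') n = c *: t m n + t m' n) /\
  (forall (c : rat) m n n', t m (c *: n + n') = c *: t m n + t m n') /\
  (forall m a n, t (rM m a) n = t m (lN a n)) /\
  (forall b m n, t (lM b m) n = lT b (t m n)) /\
  (forall m n c, t m (rN n c) = rT (t m n) c).

(** (T, lT, rT, t) is a tensor product M (x)_{A_s} N of bimodules: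
    the universal balanced map into (A_p, A_q)-bimodules. *)
Definition is_tensor (p s q : nat) (M N T : lmodType rat)
    (lM : NC p -> M -> M) (rM : M -> NC s -> M)
    (lN : NC s -> N -> N) (rN : N -> NC q -> N)
    (lT : NC p -> T -> T) (rT : T -> NC q -> T) (t : M -> N -> T) : Prop :=
  is_bimod lT rT /\
  is_balanced lM rM lN rN lT rT t /\
  (forall (P : lmodType rat) (lP : NC p -> P -> P) (rP : P -> NC q -> P)
          (f : M -> N -> P),
     is_bimod lP rP -> is_balanced lM rM lN rN lP rP f ->
     exists g : T -> P,
       [/\ is_bimod_hom lT rT lP rP g,
           (forall m n, g (t m n) = f m n) &
           (forall g' : T -> P, is_bimod_hom lT rT lP rP g' ->
              (forall m n, g' (t m n) = f m n) -> forall x, g' x = g x)]).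

Definition Al n (a x : NC n) : NC n := ncmul a x.
Definition Ar n (x b : NC n) : NC n := ncmul x b.

(** D_{n+1} = A_{n+1} as (A_n, A_{n+1})-bimodule (left action via chi_n). *)
Definition Dl n (a : NC n) (x : NC n.+1) : NC n.+1 := ncmul (ncchi a) x.
Definition Dr n (x b : NC n.+1) : NC n.+1 := ncmul x b.

(** X_n = A_{n+1} as (A_{n+1}, A_n)-bimodule (right action via chi_n). *)
Definition Xl n (a x : NC n.+1) : NC n.+1 := ncmul a x.
Definition Xr n (x : NC n.+1) (b : NC n) : NC n.+1 := ncmul x (ncchi b).

Definition sum_l n (T : lmodType rat) (lT : NC n -> T -> T)
    (a : NC n) (x : (NC n * T)%type) : (NC n * T)%type :=
  (ncmul a x.1, lT a x.2).
Definition sum_r n (T : lmodType rat) (rT : T -> NC n -> T)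
    (x : (NC n * T)%type) (b : NC n) : (NC n * T)%type :=
  (ncmul x.1 b, rT x.2 b).

(* Tensoring over A_{n+1} with A_{n+1} itself does nothing, so
   D_{n+1} (x) X_n is A_{n+1} with A_n acting on both sides through chi_n.  This
   (A_n, A_n)-bimodule splits along the two double cosets S_n \ S_{n+1} / S_n.  The trivial
   one spans a copy of A_n, split off by restricting coefficients to S_n.  The other one
   consists of the w = x s_n v, with x in S_n and v a minimal representative of S_{n-1} \ S_n,
   and these products are reduced; Y_w |-> Y_x (x) Y_v identifies its span with
   X_{n-1} (x) D_n, the inverse x (x) y |-> x Y_{s_n} y being balanced because Y_{s_n}
   commutes with A_{n-1}.  For n = 0 both sides are Q. *)

From HB Require Import structures.
From mathcomp Require Import all_boot all_order all_fingroup all_algebra zify.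
Set Implicit Arguments. Unset Strict Implicit. Unset Printing Implicit Defensive.
Import GRing.Theory.
Local Open Scope ring_scope.

(** * Inversions and the embedding of S_n into S_{n+1} *)

Section InversionCount.
Variable n : nat.
Implicit Types a b w : 'S_n.

Definition inversion w (p : 'I_n * 'I_n) : bool := (p.1 < p.2)%N && (w p.2 < w p.1)%N.

Lemma inv_countE w : inv_count w = (\sum_p inversion w p)%N.
Proof.
rewrite /inv_count -sum1dep_card big_mkcond /=.
by apply: eq_bigr => p _; rewrite /inversion; case: ifP.
Qed.

Lemma inv_count_reindex a b :
  inv_count b = (\sum_(p : 'I_n * 'I_n) ((a p.1 < a p.2)%N && (b (a p.2) < b (a p.1))%N : nat))%N.
Proof.
rewrite inv_countE (reindex_inj (h := fun p : 'I_n * 'I_n => (a p.1, a p.2))) //.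
by move=> [i j] [k l] [/perm_inj -> /perm_inj ->].
Qed.

Lemma inv_count_mulE a b :
  inv_count (a * b)%g =
    (\sum_(p : 'I_n * 'I_n) ((p.1 < p.2)%N && (b (a p.2) < b (a p.1))%N : nat))%N.
Proof. by rewrite inv_countE; apply: eq_bigr => p _; rewrite /inversion !permM. Qed.

Lemma inv_countM_le a b : (inv_count (a * b)%g <= inv_count a + inv_count b)%N.
Proof.
rewrite inv_count_mulE inv_countE (inv_count_reindex a b) -big_split /=.
apply: leq_sum => -[i j] _; rewrite /inversion /=.
case: (ltngtP i j) => ij; case: (ltngtP (a i) (a j)) => aij;
  case: (ltngtP (b (a i)) (b (a j))) => //= bij.
by move/val_inj/perm_inj: aij ij => ->; rewrite ltnn.
Qed.

Lemma inv_countM_add a b :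
    (forall i j : 'I_n, (i < j)%N -> (a j < a i)%N -> (b (a j) < b (a i))%N) ->
  inv_count (a * b)%g = (inv_count a + inv_count b)%N.
Proof.
move=> ab_inv; rewrite inv_count_mulE inv_countE (inv_count_reindex a b) -big_split /=.
apply: eq_bigr => -[i j] _; rewrite /inversion /=.
case: (ltngtP i j) => ij; case: (ltngtP (a i) (a j)) => aij;
  case: (ltngtP (b (a i)) (b (a j))) => //= bij.
all: try by move/val_inj/perm_inj: aij ij => ->; rewrite ltnn.
all: try by move/val_inj: ij aij => ->; rewrite ltnn.
all: by have := ab_inv _ _ ij aij; lia.
Qed.

Lemma inv_count1 : inv_count (1 : 'S_n)%g = 0%N.
Proof.
by rewrite inv_countE big1 // => p _; rewrite /inversion !perm1; case: ltngtP.
Qed.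

Definition reduced a b : bool := inv_count (a * b)%g == (inv_count a + inv_count b)%N.

Lemma reducedA a b c : reduced a b && reduced (a * b)%g c = reduced b c && reduced a (b * c)%g.
Proof.
have := inv_countM_le a b; have := inv_countM_le (a * b)%g c.
have := inv_countM_le b c; have := inv_countM_le a (b * c)%g.
rewrite /reduced -mulgA; set abc := inv_count _; set ab := inv_count (a * b)%g.
set bc := inv_count (b * c)%g.
by move=> *; apply/andP/andP => -[/eqP e1 /eqP e2]; split; apply/eqP; lia.
Qed.

End InversionCount.

Notation lft w := (lift_perm ord_max ord_max w).

Lemma inv_count_lift n (x : 'S_n) : inv_count (lft x) = inv_count x.
Proof.
have pairE m (w : 'S_m) : inv_count w = (\sum_i \sum_j inversion w (i, j))%N.
  by rewrite inv_countE pair_bigA; apply: eq_bigr => -[].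
rewrite !pairE (bigD1_ord ord_max) //= big1 => [|j _]; last first.
  by rewrite /inversion /= ltnNge -ltnS ltn_ord.
apply: eq_bigr => i _; rewrite (bigD1_ord ord_max) // /inversion lift_perm_id.
rewrite [(ord_max < _)%N]ltnNge leq_ord andbF /=.
by apply: eq_bigr => j _; rewrite !lift_perm_lift /= /bump !(leqNgt n) !ltn_ord.
Qed.

Lemma lft_inj n : injective (fun x : 'S_n => lft x).
Proof.
move=> a b eq_ab; apply/permP => i; apply: (@lift_inj _ ord_max).
by rewrite -!(@lift_perm_lift _ ord_max ord_max) eq_ab.
Qed.

Lemma lftM n (a b : 'S_n) : lft (a * b)%g = (lft a * lft b)%g.
Proof. by rewrite lift_permM. Qed.

Lemma lft_ltnE n (x : 'S_n) (y : 'I_n.+1) (lt_y_n : (y < n)%N) :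
  lft x y = x (Ordinal lt_y_n) :> nat.
Proof.
have y_lift : y = lift ord_max (Ordinal lt_y_n).
  by apply/val_inj; rewrite /= /bump leqNgt lt_y_n.
by rewrite {1}y_lift lift_perm_lift lift_max.
Qed.

Lemma lft_ltn n (x : 'S_n) (y : 'I_n.+1) : (y < n)%N -> (lft x y < n)%N.
Proof. by move=> lt_y_n; rewrite (lft_ltnE x lt_y_n). Qed.

Lemma lft_onto n (w : 'S_n.+1) : w ord_max = ord_max -> exists x : 'S_n, lft x = w.
Proof.
move=> w_max; pose f (i : 'I_n) := odflt i (unlift ord_max (w (lift ord_max i))).
have fE i : lift ord_max (f i) = w (lift ord_max i).
  rewrite /f; case: unliftP => [j -> //|w_i].
  by have := neq_lift ord_max i; rewrite {1}(perm_inj (etrans w_max (esym w_i))) eqxx.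
have f_inj : injective f.
  by move=> i j eq_f; apply/(@lift_inj _ ord_max)/(@perm_inj _ w); rewrite -!fE eq_f.
exists (perm f_inj); apply/permP => y; case: (unliftP ord_max y) => [j ->|->].
  by rewrite lift_perm_lift permE fE.
by rewrite lift_perm_id w_max.
Qed.

Definition unlft n (w : 'S_n.+1) : 'S_n := odflt 1%g [pick x | lft x == w].

Lemma lftK n : cancel (fun x : 'S_n => lft x) (@unlft n).
Proof.
move=> x; rewrite /unlft; case: pickP => [y /eqP/lft_inj //|].
by move/(_ x); rewrite eqxx.
Qed.

Lemma unlftK n (w : 'S_n.+1) : w ord_max = ord_max -> lft (unlft w) = w.
Proof. by case/lft_onto => x <-; rewrite lftK. Qed.

(** * The double coset of the last simple transposition *)

Section DoubleCoset.
Variable m : nat.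

Definition slast : 'S_m.+2 := tperm (lift ord_max ord_max) ord_max.

Lemma slastE (y : 'I_m.+2) :
  slast y = (if y == m :> nat then m.+1 else if y == m.+1 :> nat then m else y) :> nat.
Proof.
rewrite /slast; case: tpermP => [->|->|ny_m ny_max]; rewrite ?lift_max /= ?eqxx //.
  by rewrite (gtn_eqF (ltnSn m)).
rewrite ifN_eq; last by apply/eqP => y_m; apply: ny_m; apply: ord_inj; rewrite lift_max.
by rewrite ifN_eq //; apply/eqP => y_max; apply: ny_max; apply: ord_inj.
Qed.

Lemma slast2 : (slast * slast = 1)%g.
Proof. exact: tperm2. Qed.

Definition cycle_to_fun (q y : 'I_m.+1) : 'I_m.+1 :=
  inord (if y == m :> nat then q : nat else if (y < q)%N then y : nat else y.+1).

Lemma cycle_to_funE q y :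
  cycle_to_fun q y =
    (if y == m :> nat then q : nat else if (y < q)%N then y : nat else y.+1) :> nat.
Proof.
rewrite /cycle_to_fun inordK //; have := ltn_ord y; have := ltn_ord q.
by case: eqP => [//|ny_m]; case: ifP => _ /=; lia.
Qed.

Lemma cycle_to_fun_inj q : injective (cycle_to_fun q).
Proof.
move=> y z /(congr1 val); rewrite /= !cycle_to_funE => eq_yz; apply: val_inj => /=.
move: eq_yz; have := ltn_ord y; have := ltn_ord z; have := ltn_ord q.
case: (eqVneq (y : nat) m) => [ym|ny]; case: (eqVneq (z : nat) m) => [zm|nz];
  rewrite ?ym ?zm ?eqxx ?(negbTE ny) ?(negbTE nz); case: (ltnP y q); case: (ltnP z q); lia.
Qed.

Definition cycle_to q : 'S_m.+1 := perm (@cycle_to_fun_inj q).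

Lemma cycle_toE q y :
  cycle_to q y = (if y == m :> nat then q : nat else if (y < q)%N then y : nat else y.+1) :> nat.
Proof. by rewrite permE cycle_to_funE. Qed.

Lemma cycle_to_ord_max : cycle_to ord_max = 1%g.
Proof.
apply/permP => y; apply: ord_inj; rewrite cycle_toE perm1 /=.
by have := ltn_ord y; case: eqP => [->|ny_m] // lt_y; rewrite ifT //; lia.
Qed.

Lemma lft_cycle_toE q (y : 'I_m.+2) : (y < m.+1)%N ->
  lft (cycle_to q) y =
    (if y == m :> nat then q : nat else if (y < q)%N then y : nat else y.+1) :> nat.
Proof. by move=> lt_y; rewrite (lft_ltnE _ lt_y) cycle_toE. Qed.

Lemma lft_cycle_to_slastE q (y : 'I_m.+2) : (y < m.+1)%N ->
  lft (cycle_to q) (slast y) =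
    (if y == m :> nat then m.+1 else if (y < q)%N then y : nat else y.+1) :> nat.
Proof.
move=> lt_y; case: (eqVneq (y : nat) m) => [y_m|ny_m].
  have -> : slast y = ord_max by apply: ord_inj; rewrite slastE y_m eqxx.
  by rewrite lift_perm_id.
have ny_max : (y == m.+1 :> nat) = false by apply/eqP; lia.
have lt_sy : (slast y < m.+1)%N by rewrite slastE (negbTE ny_m) ny_max.
by rewrite (lft_cycle_toE _ lt_sy) slastE (negbTE ny_m) ny_max (negbTE ny_m).
Qed.

(* The permutations moving the last point are exactly the [dcoset x q], each in a unique
   way; [cycle_to q] runs over the minimal length representatives of S_m in S_{m+1}. *)
Definition dcoset (x : 'S_m.+1) q : 'S_m.+2 := (lft x * slast * lft (cycle_to q))%g.

Lemma reduced_slast_cycle_to q : reduced slast (lft (cycle_to q)).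
Proof.
apply/eqP/inv_countM_add => i j lt_ij lt_s.
have [i_m j_max] : i = m :> nat /\ j = m.+1 :> nat.
  move: lt_s; rewrite !slastE; have := ltn_ord i; have := ltn_ord j.
  by case: (eqVneq (i : nat) m); case: (eqVneq (i : nat) m.+1);
    case: (eqVneq (j : nat) m); case: (eqVneq (j : nat) m.+1); lia.
have -> : slast i = ord_max by apply: ord_inj; rewrite slastE i_m eqxx.
have lt_sj : (slast j < m.+1)%N by rewrite slastE j_max (gtn_eqF (ltnSn m)) eqxx.
by rewrite lift_perm_id (lft_cycle_toE _ lt_sj) slastE j_max (gtn_eqF (ltnSn m)) !eqxx /=.
Qed.

Lemma reduced_lft_slast_cycle_to x q : reduced (lft x) (slast * lft (cycle_to q)).
Proof.
apply/eqP/inv_countM_add => i j lt_ij lt_x; rewrite !permM.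
have lt_i : (i < m.+1)%N by have := ltn_ord j; lia.
have lt_xi := lft_ltn x lt_i.
set xi := (lft x i : nat) in lt_x lt_xi *; set xj := (lft x j : nat) in lt_x *.
have lt_xj : (xj < m.+1)%N by lia.
rewrite (lft_cycle_to_slastE _ lt_xj) (lft_cycle_to_slastE _ lt_xi); have := ltn_ord q.
by case: (eqVneq xj m); case: (eqVneq xi m); case: (ltnP xj q); case: (ltnP xi q); lia.
Qed.

Lemma inv_count_dcoset x q :
  inv_count (dcoset x q) = (inv_count x + inv_count slast + inv_count (cycle_to q))%N.
Proof.
rewrite /dcoset -mulgA (eqP (reduced_lft_slast_cycle_to x q)).
by rewrite (eqP (reduced_slast_cycle_to q)) !inv_count_lift addnA.
Qed.

Lemma reduced_lft_cycle_to (c : 'S_m) q : reduced (lft c) (cycle_to q).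
Proof.
apply/eqP/inv_countM_add => i j lt_ij lt_c.
have lt_i : (i < m)%N by have := ltn_ord j; lia.
have lt_ci := lft_ltn c lt_i.
rewrite !cycle_toE; have := ltn_ord q.
set ci := (lft c i : nat) in lt_c lt_ci *; set cj := (lft c j : nat) in lt_c *.
by case: (eqVneq cj m); case: (eqVneq ci m); case: (ltnP cj q); case: (ltnP ci q); lia.
Qed.

Lemma slast_lft2 (c : 'S_m) : (slast * lft (lft c) = lft (lft c) * slast)%g.
Proof. by rewrite conjgC /slast tpermJ lift_perm_lift !lift_perm_id. Qed.

Lemma cycle_to_last q : cycle_to q ord_max = q.
Proof. by apply: ord_inj; rewrite cycle_toE eqxx. Qed.

Lemma cycle_to_mulr q (b : 'S_m.+1) :
  exists c : 'S_m, (cycle_to q * b = lft c * cycle_to (b q))%g.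
Proof.
have fix_max : (cycle_to q * b * (cycle_to (b q))^-1)%g ord_max = ord_max.
  by rewrite !permM cycle_to_last; apply/(canLR (permK _)); rewrite cycle_to_last.
by have [c c_def] := lft_onto fix_max; exists c; rewrite c_def mulgKV.
Qed.

Lemma dcoset_last x q : dcoset x q ord_max = lift ord_max q.
Proof.
by rewrite !permM lift_perm_id /slast tpermR lift_perm_lift cycle_to_last.
Qed.

Lemma dcoset_moved x q : dcoset x q ord_max != ord_max.
Proof. by rewrite dcoset_last eq_sym neq_lift. Qed.

Definition dc_pt (w : 'S_m.+2) : 'I_m.+1 := odflt ord_max (unlift ord_max (w ord_max)).

Definition dc_perm (w : 'S_m.+2) : 'S_m.+1 :=
  unlft (w * (lft (cycle_to (dc_pt w)))^-1 * slast)%g.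

Lemma dc_pt_dcoset x q : dc_pt (dcoset x q) = q.
Proof. by rewrite /dc_pt dcoset_last liftK. Qed.

Lemma dcoset_dc (w : 'S_m.+2) : w ord_max != ord_max -> dcoset (dc_perm w) (dc_pt w) = w.
Proof.
move=> w_moved; set L := lft (cycle_to (dc_pt w)).
have w_max : w ord_max = L (lift ord_max ord_max).
  rewrite lift_perm_lift cycle_to_last /dc_pt.
  by case: unliftP w_moved => [j -> //|->]; rewrite eqxx.
have fix_max : (w * L^-1 * slast)%g ord_max = ord_max.
  by rewrite !permM w_max permK /slast tpermL.
by rewrite /dcoset /dc_perm -/L unlftK // -(mulgA _ slast slast) slast2 mulg1 mulgKV.
Qed.

Lemma dc_perm_dcoset x q : dc_perm (dcoset x q) = x.
Proof.
rewrite /dc_perm dc_pt_dcoset /dcoset mulgK -mulgA slast2 mulg1.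
exact: lftK.
Qed.

Lemma lft_or_dcoset (w : 'S_m.+2) : (exists x, w = lft x) \/ (exists x q, w = dcoset x q).
Proof.
have [/lft_onto[x <-]|/dcoset_dc <-] := eqVneq (w ord_max) ord_max; first by left; exists x.
by right; exists (dc_perm w), (dc_pt w).
Qed.

Lemma dcoset1 : dcoset 1 ord_max = slast.
Proof. by rewrite /dcoset cycle_to_ord_max !lift_perm1 mul1g mulg1. Qed.

Lemma dcoset_mull x u q : (lft x * dcoset u q)%g = dcoset (x * u) q.
Proof. by rewrite /dcoset !mulgA lftM. Qed.

Lemma dcoset_mulr u q (y : 'S_m.+1) (c : 'S_m) :
  (cycle_to q * y = lft c * cycle_to (y q))%g ->
  (dcoset u q * lft y)%g = dcoset (u * lft c) (y q).
Proof.
move=> cyc_y; rewrite /dcoset -(mulgA _ (lft (cycle_to q))) -lftM cyc_y (lftM (lft c)).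
by rewrite mulgA -(mulgA (lft u) slast) slast_lft2 mulgA -lftM.
Qed.

Lemma reduced_lft_dcoset x u q : reduced (lft x) (dcoset u q) = reduced x u.
Proof.
by rewrite /reduced dcoset_mull !inv_count_dcoset inv_count_lift; apply/eqP/eqP; lia.
Qed.

Lemma reduced_dcoset_lft u q (y : 'S_m.+1) (c : 'S_m) :
    (cycle_to q * y = lft c * cycle_to (y q))%g ->
  reduced (dcoset u q) (lft y) = reduced (cycle_to q) y && reduced u (lft c).
Proof.
move=> cyc_y; rewrite /reduced (dcoset_mulr _ cyc_y) !inv_count_dcoset inv_count_lift.
have := eqP (reduced_lft_cycle_to c (y q)); rewrite -cyc_y.
have := inv_countM_le u (lft c); have := inv_countM_le (cycle_to q) y.
rewrite inv_count_lift => *.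
by apply/eqP/andP => [e|[/eqP e1 /eqP e2]]; [split; apply/eqP|]; lia.
Qed.

Lemma reduced_slast_lft2 c : reduced slast (lft (lft c)) = reduced (lft (lft c)) slast.
Proof. by rewrite /reduced slast_lft2 addnC. Qed.

End DoubleCoset.

(** * The nilCoxeter algebra on its standard basis *)

Section LinearPredicate.
Variables (U V : lmodType rat) (f : U -> V).
Hypothesis f_lin : linear f.

Lemma lin0 : f 0 = 0.
Proof. by have := f_lin (-1) 0 0; rewrite scaleN1r oppr0 addr0 scaleN1r addNr. Qed.

Lemma linD x y : f (x + y) = f x + f y.
Proof. by have := f_lin 1 x y; rewrite !scale1r. Qed.

Lemma linZ c x : f (c *: x) = c *: f x.
Proof. by have := f_lin c x 0; rewrite !addr0 lin0 addr0. Qed.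

Lemma lin_sum I (r : seq I) (P : pred I) (F : I -> U) :
  f (\sum_(i <- r | P i) F i) = \sum_(i <- r | P i) f (F i).
Proof. by elim/big_rec2: _ => [|i y1 y2 _ <-]; rewrite ?lin0 ?linD. Qed.

End LinearPredicate.

Lemma lin_comp (U V W : lmodType rat) (f : U -> V) (g : V -> W) :
  linear f -> linear g -> linear (fun x => g (f x)).
Proof. by move=> f_lin g_lin c x y; rewrite f_lin g_lin. Qed.

Lemma lin_add (U V : lmodType rat) (f g : U -> V) :
  linear f -> linear g -> linear (fun x => f x + g x).
Proof. by move=> f_lin g_lin c x y; rewrite f_lin g_lin scalerDr addrACA. Qed.

Lemma nc_expand n (a : NC n) : a = \sum_w a w *: Yb w.
Proof.
apply/ffunP => v; rewrite sum_ffunE (bigD1 v) //= big1 => [|w nwv].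
  by rewrite !ffunE eqxx addr0 /= [RHS]mulr1.
by rewrite !ffunE eq_sym (negbTE nwv) /= [LHS]mulr0.
Qed.

Lemma lin_ext n (V : lmodType rat) (f g : NC n -> V) :
  linear f -> linear g -> (forall w, f (Yb w) = g (Yb w)) -> f =1 g.
Proof.
move=> f_lin g_lin fg a; rewrite (nc_expand a) !lin_sum //.
by apply: eq_bigr => w _; rewrite !linZ // fg.
Qed.

Lemma lin_ext2 p q (V : lmodType rat) (f g : NC p -> NC q -> V) :
    (forall b, linear (f^~ b)) -> (forall b, linear (g^~ b)) ->
    (forall a, linear (f a)) -> (forall a, linear (g a)) ->
  (forall u v, f (Yb u) (Yb v) = g (Yb u) (Yb v)) -> forall a b, f a b = g a b.
Proof.
move=> f_linl g_linl f_linr g_linr fg a b.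
by apply: (lin_ext (f_linl b) (g_linl b)) => u; apply: lin_ext.
Qed.

Lemma ncmul_Yb n (u v : 'S_n) : ncmul (Yb u) (Yb v) = (reduced u v)%:R *: Yb (u * v)%g.
Proof.
rewrite /ncmul (bigD1 u) //= [X in _ + X]big1 => [|u' nu'].
  rewrite addr0 (bigD1 v) //= [X in _ + X]big1 => [|v' nv'].
    by rewrite addr0 !ffunE !eqxx !mul1r.
  by rewrite !ffunE (negbTE nv') mulr0 mul0r scale0r.
by apply: big1 => v' _; rewrite ffunE (negbTE nu') !mul0r scale0r.
Qed.

Lemma ncmul_linl n (b : NC n) : linear (fun a => ncmul a b).
Proof.
move=> c a a'; rewrite /ncmul scaler_sumr -big_split; apply: eq_bigr => u _.
rewrite scaler_sumr -big_split; apply: eq_bigr => v _.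
by rewrite /= scalerA -scalerDl !ffunE !mulrDl !mulrA.
Qed.

Lemma ncmul_linr n (a : NC n) : linear (ncmul a).
Proof.
move=> c b b'; rewrite /ncmul scaler_sumr -big_split; apply: eq_bigr => u _.
rewrite scaler_sumr -big_split; apply: eq_bigr => v _.
by rewrite /= scalerA -scalerDl !ffunE mulrDr mulrDl !mulrA [c * a u]mulrC.
Qed.

Lemma ncmulA n (a b c : NC n) : ncmul (ncmul a b) c = ncmul a (ncmul b c).
Proof.
move: a b; apply: (lin_ext2 (f := fun a b => ncmul (ncmul a b) c)
                            (g := fun a b => ncmul a (ncmul b c))) => [b|b|a|a|u v].
- exact: lin_comp (ncmul_linl b) (ncmul_linl c).
- exact: ncmul_linl.
- exact: lin_comp (ncmul_linr a) (ncmul_linl c).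
- exact: lin_comp (ncmul_linl c) (ncmul_linr a).
move: c; apply: (lin_ext (f := ncmul (ncmul (Yb u) (Yb v)))
                         (g := fun c => ncmul (Yb u) (ncmul (Yb v) c))) => [||w].
- exact: ncmul_linr.
- exact: lin_comp (ncmul_linr (Yb v)) (ncmul_linr (Yb u)).
rewrite !ncmul_Yb (linZ (ncmul_linl _)) (linZ (ncmul_linr _)) !ncmul_Yb !scalerA.
by rewrite -!natrM !mulnb reducedA mulgA.
Qed.

Lemma ncmul1l n : left_id (ncone n) (@ncmul n).
Proof.
apply: (lin_ext (f := ncmul _) (g := id)) => [||w]; [exact: ncmul_linr | by [] |].
by rewrite ncmul_Yb /reduced mul1g inv_count1 eqxx scale1r.
Qed.

Lemma ncmul1r n : right_id (ncone n) (@ncmul n).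
Proof.
apply: (lin_ext (f := fun a => ncmul a _) (g := id)) => [||w]; [exact: ncmul_linl | by [] |].
by rewrite ncmul_Yb /reduced mulg1 inv_count1 addn0 eqxx scale1r.
Qed.

Lemma ncmul0l n (a : NC n) : ncmul 0 a = 0.
Proof. exact: (lin0 (ncmul_linl a)). Qed.

Lemma ncmul0r n (a : NC n) : ncmul a 0 = 0.
Proof. exact: (lin0 (ncmul_linr a)). Qed.

Lemma ncchi_lin n : linear (@ncchi n).
Proof.
move=> c a b; rewrite /ncchi scaler_sumr -big_split; apply: eq_bigr => w _ /=.
by rewrite scalerA -scalerDl !ffunE.
Qed.

Lemma ncchi_Yb n (w : 'S_n) : ncchi (Yb w) = Yb (lft w).
Proof.
rewrite /ncchi (bigD1 w) //= big1 => [|u nu]; first by rewrite ffunE eqxx scale1r addr0.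
by rewrite ffunE (negbTE nu) scale0r.
Qed.

Lemma ncchiM n (a b : NC n) : ncchi (ncmul a b) = ncmul (ncchi a) (ncchi b).
Proof.
move: a b; apply: (lin_ext2 (f := fun a b => ncchi (ncmul a b))
                            (g := fun a b => ncmul (ncchi a) (ncchi b))) => [b|b|a|a|u v].
- exact: lin_comp (ncmul_linl b) (@ncchi_lin n).
- exact: lin_comp (@ncchi_lin n) (ncmul_linl _).
- exact: lin_comp (ncmul_linr a) (@ncchi_lin n).
- exact: lin_comp (@ncchi_lin n) (ncmul_linr _).
by rewrite ncmul_Yb (linZ (@ncchi_lin n)) !ncchi_Yb ncmul_Yb /reduced -lftM !inv_count_lift.
Qed.

Lemma ncchi1 n : ncchi (ncone n) = ncone n.+1.
Proof. by rewrite /ncone ncchi_Yb lift_perm1. Qed.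

Definition ncpi n (z : NC n.+1) : NC n := [ffun w => z (lft w)].

Lemma ncpi_lin n : linear (@ncpi n).
Proof. by move=> c a b; apply/ffunP => w; rewrite !ffunE. Qed.

Lemma ncpi_Yb_lft n (w : 'S_n) : ncpi (Yb (lft w)) = Yb w.
Proof. by apply/ffunP => v; rewrite !ffunE (inj_eq (@lft_inj n)). Qed.

Lemma ncpi_Yb_moved n (w : 'S_n.+1) : w ord_max != ord_max -> ncpi (Yb w) = 0.
Proof.
move=> w_moved; apply/ffunP => v; rewrite !ffunE.
by case: eqP => // v_w; move: w_moved; rewrite -v_w lift_perm_id eqxx.
Qed.

Lemma ncchiK n : cancel (@ncchi n) (@ncpi n).
Proof.
apply: (lin_ext (f := fun a => ncpi (ncchi a)) (g := id)) => [||w].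
- exact: lin_comp (@ncchi_lin n) (@ncpi_lin n).
- by [].
by rewrite ncchi_Yb ncpi_Yb_lft.
Qed.

Lemma ncpi_mull n (a : NC n) (z : NC n.+1) : ncpi (ncmul (ncchi a) z) = ncmul a (ncpi z).
Proof.
move: a z; apply: (lin_ext2 (f := fun a z => ncpi (ncmul (ncchi a) z))
                            (g := fun a z => ncmul a (ncpi z))) => [z|z|a|a|x w].
- exact: lin_comp (@ncchi_lin _) (lin_comp (ncmul_linl z) (@ncpi_lin _)).
- exact: ncmul_linl.
- exact: lin_comp (ncmul_linr _) (@ncpi_lin _).
- exact: lin_comp (@ncpi_lin _) (ncmul_linr a).
rewrite ncchi_Yb ncmul_Yb (linZ (@ncpi_lin _)).
have [/lft_onto[y <-]|w_moved] := eqVneq (w ord_max) ord_max.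
  by rewrite -lftM !ncpi_Yb_lft ncmul_Yb /reduced -lftM !inv_count_lift.
have xw_moved : (lft x * w)%g ord_max != ord_max by rewrite permM lift_perm_id.
by rewrite !ncpi_Yb_moved // ncmul0r scaler0.
Qed.

Lemma ncpi_mulr n (z : NC n.+1) (b : NC n) : ncpi (ncmul z (ncchi b)) = ncmul (ncpi z) b.
Proof.
move: z b; apply: (lin_ext2 (f := fun z b => ncpi (ncmul z (ncchi b)))
                            (g := fun z b => ncmul (ncpi z) b)) => [b|b|z|z|w y].
- exact: lin_comp (ncmul_linl _) (@ncpi_lin _).
- exact: lin_comp (@ncpi_lin _) (ncmul_linl b).
- exact: lin_comp (@ncchi_lin _) (lin_comp (ncmul_linr z) (@ncpi_lin _)).
- exact: ncmul_linr.
rewrite ncchi_Yb ncmul_Yb (linZ (@ncpi_lin _)).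
have [/lft_onto[x <-]|w_moved] := eqVneq (w ord_max) ord_max.
  by rewrite -lftM !ncpi_Yb_lft ncmul_Yb /reduced -lftM !inv_count_lift.
have wy_moved : (w * lft y)%g ord_max != ord_max.
  by rewrite permM (can2_eq (permK _) (permKV _)) lift_permV lift_perm_id.
by rewrite !ncpi_Yb_moved // ncmul0l scaler0.
Qed.

(** * Bimodules and tensor products *)

Lemma is_bimod_DX n : is_bimod (@Dl n) (@Xr n).
Proof.
rewrite /Dl /Xr; do 8?split.
- by move=> c a b m; rewrite ncchi_lin ncmul_linl.
- by move=> c a m m'; rewrite ncmul_linr.
- by move=> c m m' b; rewrite ncmul_linl.
- by move=> c m a b; rewrite ncchi_lin ncmul_linr.
- by move=> a b m; rewrite ncchiM ncmulA.
- by move=> m a b; rewrite ncchiM ncmulA.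
- by move=> m; rewrite ncchi1 ncmul1l.
- by move=> m; rewrite ncchi1 ncmul1r.
- by move=> a m b; rewrite ncmulA.
Qed.

Lemma is_bimod_sum n (T : lmodType rat) (l : NC n -> T -> T) (r : T -> NC n -> T) :
  is_bimod l r -> is_bimod (sum_l l) (sum_r r).
Proof.
case=> [l_linl [l_linr [r_linl [r_linr [lM [rM [l1 [r1 lr]]]]]]]].
rewrite /sum_l /sum_r; do 8?split.
- by move=> c a b [x y]; rewrite /= ncmul_linl l_linl.
- by move=> c a [x y] [x' y']; rewrite /= ncmul_linr l_linr.
- by move=> c [x y] [x' y'] b; rewrite /= ncmul_linl r_linl.
- by move=> c [x y] a b; rewrite /= ncmul_linr r_linr.
- by move=> a b [x y]; rewrite /= ncmulA lM.
- by move=> [x y] a b; rewrite /= ncmulA rM.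
- by move=> [x y]; rewrite /= ncmul1l l1.
- by move=> [x y]; rewrite /= ncmul1r r1.
- by move=> a [x y] b; rewrite /= ncmulA lr.
Qed.

Lemma bimod_hom_inr n (T : lmodType rat) (l : NC n -> T -> T) (r : T -> NC n -> T) :
  is_bimod_hom l r (sum_l l) (sum_r r) (fun x => (0, x)).
Proof.
split; first by move=> c x y; rewrite [RHS](_ : _ = (c *: 0 + 0, c *: x + y)) // scaler0 addr0.
by split=> [a x|x b]; rewrite /sum_l /sum_r /= ?ncmul0r ?ncmul0l.
Qed.

Section BimoduleMaps.
Variables p s q : nat.
Variables (M N T P Q : lmodType rat).
Variables (lM : NC p -> M -> M) (rM : M -> NC s -> M).
Variables (lN : NC s -> N -> N) (rN : N -> NC q -> N).
Variables (lT : NC p -> T -> T) (rT : T -> NC q -> T).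
Variables (lP : NC p -> P -> P) (rP : P -> NC q -> P).
Variables (lQ : NC p -> Q -> Q) (rQ : Q -> NC q -> Q).

Lemma bimod_hom_comp (f : T -> P) (g : P -> Q) :
    is_bimod_hom lT rT lP rP f -> is_bimod_hom lP rP lQ rQ g ->
  is_bimod_hom lT rT lQ rQ (fun x => g (f x)).
Proof.
case=> [f_lin [fl fr]] [g_lin [gl gr]]; split; first exact: lin_comp.
by split=> [a x|x b]; rewrite ?fl ?gl ?fr ?gr.
Qed.

Lemma bimod_iso_trans :
  bimod_iso lT rT lP rP -> bimod_iso lP rP lQ rQ -> bimod_iso lT rT lQ rQ.
Proof.
case=> f [f_hom f_bij] [g [g_hom g_bij]]; exists (fun x => g (f x)).
by split; [exact: bimod_hom_comp f_hom g_hom | exact: bij_comp g_bij f_bij].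
Qed.

Lemma balanced_hom_comp (t : M -> N -> T) (g : T -> P) :
    is_balanced lM rM lN rN lT rT t -> is_bimod_hom lT rT lP rP g ->
  is_balanced lM rM lN rN lP rP (fun x y => g (t x y)).
Proof.
case=> [t_linl [t_linr [t_mid [t_l t_r]]]] [g_lin [gl gr]].
do 4?split=> *; rewrite ?t_linl ?t_linr ?g_lin ?t_mid ?t_l ?gl ?t_r ?gr //.
Qed.

Lemma tensor_hom_ext (t : M -> N -> T) (g1 g2 : T -> P) :
    is_tensor lM rM lN rN lT rT t -> is_bimod lP rP ->
    is_bimod_hom lT rT lP rP g1 -> is_bimod_hom lT rT lP rP g2 ->
  (forall x y, g1 (t x y) = g2 (t x y)) -> g1 =1 g2.
Proof.
case=> _ [t_bal t_univ] P_bimod g1_hom g2_hom g12 z.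
have [g [_ _ g_uniq]] := t_univ _ _ _ _ P_bimod (balanced_hom_comp t_bal g2_hom).
by rewrite (g_uniq _ g1_hom g12) (g_uniq _ g2_hom).
Qed.

End BimoduleMaps.

Lemma ncmul_balanced_DX n :
  is_balanced (@Dl n) (@Dr n) (@Xl n) (@Xr n) (@Dl n) (@Xr n) (@ncmul n.+1).
Proof.
rewrite /is_balanced /Dl /Dr /Xl /Xr; do 4?split=> *; rewrite ?ncmul_linl ?ncmul_linr //.
all: by rewrite ncmulA.
Qed.

Lemma tensor_DX_iso n (T : lmodType rat) (l : NC n -> T -> T) (r : T -> NC n -> T)
    (t : NC n.+1 -> NC n.+1 -> T) :
  is_tensor (@Dl n) (@Dr n) (@Xl n) (@Xr n) l r t -> bimod_iso l r (@Dl n) (@Xr n).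
Proof.
move=> tensor_t; have [T_bimod [t_bal t_univ]] := tensor_t.
have [t_linl [_ [t_mid [t_l t_r]]]] := t_bal.
have [g [g_hom gt _]] := t_univ _ _ _ _ (@is_bimod_DX n) (ncmul_balanced_DX n).
pose h z := t z (ncone n.+1).
have h_hom : is_bimod_hom (@Dl n) (@Xr n) l r h.
  split=> [c x y|]; first by rewrite /h t_linl.
  split=> [a x|x b]; first by rewrite /h t_l.
  rewrite /h -t_r; have := t_mid x (ncchi b) (ncone n.+1).
  by rewrite /Xl /Xr ncmul1l ncmul1r.
exists g; split=> //; exists h => z; last by rewrite /h gt ncmul1r.
apply: (tensor_hom_ext (g1 := fun z => h (g z)) (g2 := id) tensor_t T_bimod).
- exact: bimod_hom_comp g_hom h_hom.
- by split.
by move=> x y; rewrite /h gt; have := t_mid x y (ncone n.+1); rewrite /Xl ncmul1r.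
Qed.

Lemma ncpiK0 : cancel (@ncpi 0) (@ncchi 0).
Proof.
apply: (lin_ext (f := fun z => ncchi (ncpi z)) (g := id)) => [||w].
- exact: lin_comp (@ncpi_lin 0) (@ncchi_lin 0).
- by [].
have -> : w = lft 1%g by apply/permP => i; rewrite [LHS]ord1 [RHS]ord1.
by rewrite ncpi_Yb_lft ncchi_Yb.
Qed.

Lemma bimod_iso_D1X0_A0 : bimod_iso (@Dl 0) (@Xr 0) (@Al 0) (@Ar 0).
Proof.
exists (@ncpi 0); split; last by exists (@ncchi 0); [exact: ncpiK0 | exact: ncchiK].
by split; [exact: ncpi_lin | split; [exact: ncpi_mull | exact: ncpi_mulr]].
Qed.

(** * The splitting of A_{m+2} as an (A_{m+1}, A_{m+1})-bimodule *)

Section TensorXD.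
Variable m : nat.
Variables (T : lmodType rat) (l : NC m.+1 -> T -> T) (r : T -> NC m.+1 -> T).
Variable t : NC m.+1 -> NC m.+1 -> T.
Hypothesis tensor_t : is_tensor (@Xl m) (@Xr m) (@Dl m) (@Dr m) l r t.

Let T_bimod : is_bimod l r. Proof. by case: tensor_t. Qed.
Let t_bal : is_balanced (@Xl m) (@Xr m) (@Dl m) (@Dr m) l r t.
Proof. by case: tensor_t => _ []. Qed.

Let t_linl y : linear (t^~ y). Proof. by case: t_bal => t_lin _ c x x'; rewrite t_lin. Qed.
Let t_linr x : linear (t x). Proof. by case: t_bal => _ [t_lin _] c y y'; rewrite t_lin. Qed.
Let t_mid x c y : t (ncmul x (ncchi c)) y = t x (ncmul (ncchi c) y).
Proof. by case: t_bal => _ [_ [t_m _]]; apply: t_m. Qed.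
Let t_mull b x y : t (ncmul b x) y = l b (t x y).
Proof. by case: t_bal => _ [_ [_ [t_l _]]]; apply: t_l. Qed.
Let t_mulr x y c : t x (ncmul y c) = r (t x y) c.
Proof. by case: t_bal => _ [_ [_ [_ t_r]]]; apply: t_r. Qed.
Let l_linl z : linear (l^~ z). Proof. by case: T_bimod => l_lin _ c a b; rewrite l_lin. Qed.
Let l_linr a : linear (l a). Proof. by case: T_bimod => _ [l_lin _] c x y; rewrite l_lin. Qed.
Let r_linl b : linear (r^~ b). Proof. by case: T_bimod => _ [_ [r_lin _]] c x y; rewrite r_lin. Qed.
Let r_linr z : linear (r z).
Proof. by case: T_bimod => _ [_ [_ [r_lin _]]] c a b; rewrite r_lin. Qed.

Definition phib (w : 'S_m.+2) : T :=
  if w ord_max == ord_max then 0 else t (Yb (dc_perm w)) (Yb (cycle_to (dc_pt w))).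

Definition phi (z : NC m.+2) : T := \sum_w z w *: phib w.

Lemma phi_lin : linear phi.
Proof.
move=> c x y; rewrite /phi scaler_sumr -big_split; apply: eq_bigr => w _ /=.
by rewrite !ffunE scalerDl scalerA.
Qed.

Lemma phi_Yb w : phi (Yb w) = phib w.
Proof.
rewrite /phi (bigD1 w) //= big1 => [|u nu]; first by rewrite ffunE eqxx scale1r addr0.
by rewrite ffunE (negbTE nu) scale0r.
Qed.

Lemma phib_lft x : phib (lft x) = 0.
Proof. by rewrite /phib lift_perm_id eqxx. Qed.

Lemma phib_dcoset x q : phib (dcoset x q) = t (Yb x) (Yb (cycle_to q)).
Proof. by rewrite /phib (negbTE (dcoset_moved _ _)) dc_perm_dcoset dc_pt_dcoset. Qed.

Lemma phi_mull a z : phi (ncmul (ncchi a) z) = l a (phi z).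
Proof.
move: a z; apply: (lin_ext2 (f := fun a z => phi (ncmul (ncchi a) z))
                            (g := fun a z => l a (phi z))) => [z|z|a|a|x w].
- exact: lin_comp (@ncchi_lin _) (lin_comp (ncmul_linl z) phi_lin).
- exact: l_linl.
- exact: lin_comp (ncmul_linr _) phi_lin.
- exact: lin_comp phi_lin (l_linr a).
rewrite ncchi_Yb ncmul_Yb (linZ phi_lin) !phi_Yb.
have [[y ->]|[u [q ->]]] := lft_or_dcoset w.
  by rewrite -lftM !phib_lft scaler0 (lin0 (l_linr _)).
by rewrite dcoset_mull !phib_dcoset reduced_lft_dcoset -t_mull ncmul_Yb (linZ (t_linl _)).
Qed.

Lemma phi_mulr z b : phi (ncmul z (ncchi b)) = r (phi z) b.
Proof.
move: z b; apply: (lin_ext2 (f := fun z b => phi (ncmul z (ncchi b)))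
                            (g := fun z b => r (phi z) b)) => [b|b|z|z|w y].
- exact: lin_comp (ncmul_linl _) phi_lin.
- exact: lin_comp phi_lin (r_linl b).
- exact: lin_comp (@ncchi_lin _) (lin_comp (ncmul_linr z) phi_lin).
- exact: r_linr.
rewrite ncchi_Yb ncmul_Yb (linZ phi_lin) !phi_Yb.
have [[x ->]|[u [q ->]]] := lft_or_dcoset w.
  by rewrite -lftM !phib_lft scaler0 (lin0 (r_linl _)).
have [c cyc_y] := cycle_to_mulr q y.
rewrite (dcoset_mulr _ cyc_y) (reduced_dcoset_lft _ cyc_y) !phib_dcoset.
rewrite -t_mulr ncmul_Yb (linZ (t_linr _)) cyc_y.
have -> : Yb (lft c * cycle_to (y q))%g = ncmul (ncchi (Yb c)) (Yb (cycle_to (y q))).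
  by rewrite ncchi_Yb ncmul_Yb reduced_lft_cycle_to scale1r.
by rewrite -t_mid ncchi_Yb ncmul_Yb (linZ (t_linl _)) scalerA -natrM mulnb.
Qed.

Lemma phi_ncchi a : phi (ncchi a) = 0.
Proof.
apply: (lin_ext (f := fun a => phi (ncchi a)) (g := fun=> 0)) => [||x].
- exact: lin_comp (@ncchi_lin _) phi_lin.
- by move=> c x y; rewrite scaler0 addr0.
by rewrite ncchi_Yb phi_Yb phib_lft.
Qed.

Definition to_sum (z : NC m.+2) : NC m.+1 * T := (ncpi z, phi z).

Lemma to_sum_hom : is_bimod_hom (@Dl m.+1) (@Xr m.+1) (sum_l l) (sum_r r) to_sum.
Proof.
split; first by move=> c x y; rewrite /to_sum ncpi_lin phi_lin.
by split=> [a z|z b]; rewrite /to_sum /= ?ncpi_mull ?phi_mull ?ncpi_mulr ?phi_mulr.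
Qed.

Definition slast_sandwich (x y : NC m.+1) : NC m.+2 := Dl x (Xr (Yb (slast m)) y).

Lemma Yb_slast_comm (c : NC m) :
  ncmul (Yb (slast m)) (ncchi (ncchi c)) = ncmul (ncchi (ncchi c)) (Yb (slast m)).
Proof.
apply: (lin_ext (f := fun c => ncmul (Yb (slast m)) (ncchi (ncchi c)))
                (g := fun c => ncmul (ncchi (ncchi c)) (Yb (slast m)))) => [||w].
- exact: lin_comp (@ncchi_lin _) (lin_comp (@ncchi_lin _) (ncmul_linr _)).
- exact: lin_comp (@ncchi_lin _) (lin_comp (@ncchi_lin _) (ncmul_linl _)).
by rewrite !ncchi_Yb !ncmul_Yb reduced_slast_lft2 slast_lft2.
Qed.

Lemma slast_sandwich_balanced :
  is_balanced (@Xl m) (@Xr m) (@Dl m) (@Dr m) (@Dl m.+1) (@Xr m.+1) slast_sandwich.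
Proof.
rewrite /is_balanced /slast_sandwich /Xl /Xr /Dl /Dr; do 4?split.
- by move=> c x x' y; rewrite ncchi_lin ncmul_linl.
- by move=> c x y y'; rewrite ncchi_lin !ncmul_linr.
- move=> x c y; rewrite !ncchiM ncmulA; congr (ncmul _ _).
  by rewrite -!ncmulA Yb_slast_comm.
- by move=> b x y; rewrite ncchiM ncmulA.
- by move=> x y c; rewrite ncchiM !ncmulA.
Qed.

Lemma to_sum_slast : to_sum (Yb (slast m)) = (0, t (ncone m.+1) (ncone m.+1)).
Proof.
by rewrite /to_sum -dcoset1 ncpi_Yb_moved ?dcoset_moved // phi_Yb phib_dcoset cycle_to_ord_max.
Qed.

Section SandwichLift.
Variable psi : T -> NC m.+2.
Hypothesis psi_t : forall x y, psi (t x y) = slast_sandwich x y.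

Lemma to_sum_sandwich_lift :
  is_bimod_hom l r (@Dl m.+1) (@Xr m.+1) psi -> forall x, to_sum (psi x) = (0, x).
Proof.
move=> psi_hom; have [_ [to_sum_l to_sum_r]] := to_sum_hom.
apply: (tensor_hom_ext tensor_t (is_bimod_sum T_bimod) (bimod_hom_comp psi_hom to_sum_hom)).
  exact: bimod_hom_inr.
move=> x y; rewrite psi_t to_sum_l to_sum_r to_sum_slast /sum_l /sum_r /= ncmul0l ncmul0r.
by rewrite -t_mulr ncmul1l -t_mull ncmul1r.
Qed.

Lemma to_sumK : linear psi -> cancel to_sum (fun p => ncchi p.1 + psi p.2).
Proof.
move=> psi_lin.
apply: (lin_ext (f := fun z => ncchi (to_sum z).1 + psi (to_sum z).2) (g := id)) => [||w] //.
  exact: lin_add (lin_comp (@ncpi_lin _) (@ncchi_lin _)) (lin_comp phi_lin psi_lin).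
rewrite /to_sum /=; have [[x ->]|[x [q ->]]] := lft_or_dcoset w.
  by rewrite ncpi_Yb_lft ncchi_Yb phi_Yb phib_lft (lin0 psi_lin) addr0.
rewrite ncpi_Yb_moved ?dcoset_moved // (lin0 (@ncchi_lin _)) add0r phi_Yb phib_dcoset psi_t.
rewrite /slast_sandwich /Dl /Xr !ncchi_Yb ncmul_Yb reduced_slast_cycle_to scale1r.
by rewrite ncmul_Yb reduced_lft_slast_cycle_to scale1r mulgA.
Qed.

End SandwichLift.

Lemma bimod_iso_DX_sum : bimod_iso (@Dl m.+1) (@Xr m.+1) (sum_l l) (sum_r r).
Proof.
have [_ [_ t_univ]] := tensor_t.
have [psi [psi_hom psi_t _]] := t_univ _ _ _ _ (@is_bimod_DX m.+1) slast_sandwich_balanced.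
exists to_sum; split; first exact: to_sum_hom.
exists (fun p => ncchi p.1 + psi p.2); first by apply: to_sumK; case: psi_hom.
move=> [a x]; rewrite /= (linD to_sum_hom.1) (to_sum_sandwich_lift psi_t psi_hom).
rewrite /to_sum ncchiK phi_ncchi.
by rewrite [LHS](_ : _ = (a + 0, 0 + x)) // addr0 add0r.
Qed.

End TensorXD.

Theorem mainTheorem6 :
  (forall (T1 : lmodType rat) (l1 : NC 0 -> T1 -> T1) (r1 : T1 -> NC 0 -> T1)
          (t1 : NC 1 -> NC 1 -> T1),
     is_tensor (@Dl 0) (@Dr 0) (@Xl 0) (@Xr 0) l1 r1 t1 ->
     bimod_iso l1 r1 (@Al 0) (@Ar 0)) /\
  (forall (m : nat)
          (T1 : lmodType rat) (l1 : NC m.+1 -> T1 -> T1) (r1 : T1 -> NC m.+1 -> T1)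
          (t1 : NC m.+2 -> NC m.+2 -> T1)
          (T2 : lmodType rat) (l2 : NC m.+1 -> T2 -> T2) (r2 : T2 -> NC m.+1 -> T2)
          (t2 : NC m.+1 -> NC m.+1 -> T2),
     is_tensor (@Dl m.+1) (@Dr m.+1) (@Xl m.+1) (@Xr m.+1) l1 r1 t1 ->
     is_tensor (@Xl m) (@Xr m) (@Dl m) (@Dr m) l2 r2 t2 ->
     bimod_iso l1 r1 (@sum_l m.+1 T2 l2) (@sum_r m.+1 T2 r2)).
Proof.
split=> [T1 l1 r1 t1 tensor1 | m T1 l1 r1 t1 T2 l2 r2 t2 tensor1 tensor2].
- exact: bimod_iso_trans (tensor_DX_iso tensor1) bimod_iso_D1X0_A0.
- exact: bimod_iso_trans (tensor_DX_iso tensor1) (bimod_iso_DX_sum tensor2).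
Qed.
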